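(* Let $R$ be a semiprime left Goldie ring. Then $\mathcal{C}_R\cap\mathrm{ass}_R(S)=\emptyset$ for every Ore set $S$ of $R$.
   Context: Rings are associative with $1$. $\mathcal{C}_R$ is the set of regular elements (non-zero-divisors on both sides) of $R$. A multiplicative set satisfies $SS\subseteq S$, $1\in S$, $0\notin S$; an Ore set additionally satisfies $Sr\cap Rs\ne\emptyset$ and $rS\cap sR\neq\emptyset$ for all $r\in R,s\in S$. $\mathrm{ass}_R(S)$ is the kernel of $R\to R\langle S^{-1}\rangle$, where $R\langle S^{-1}\rangle=R\langle X_S\rangle/I_S$, $R\langle X_S\rangle$ is freely generated by $R$ and noncommuting indeterminates $x_s$ ($s\in S$) and $I_S$ is generated by $sx_s-1,x_ss-1$. (For an Ore set, $\mathrm{ass}_R(S)=\{r: srt=0\text{ for some } s,t\in S\}$.) *)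

From HB Require Import structures.
From mathcomp Require Import all_boot all_order all_algebra.
Set Implicit Arguments. Unset Strict Implicit. Unset Printing Implicit Defensive.
Import GRing.Theory.
Local Open Scope ring_scope.

Section RingDefs.
Variable R : pzRingType.

Definition regular (x : R) : Prop :=
  (forall y : R, x * y = 0 -> y = 0) /\ (forall y : R, y * x = 0 -> y = 0).

Definition left_ideal (I : R -> Prop) : Prop :=
  [/\ I 0, (forall x y, I x -> I y -> I (x + y)) & (forall r x, I x -> I (r * x))].

Definition two_sided_ideal (I : R -> Prop) : Prop :=
  left_ideal I /\ (forall r x, I x -> I (x * r)).

Definition nilpotent_ideal (I : R -> Prop) : Prop :=
  exists n : nat, forall l : seq R, size l = n -> (forall x, x \in l -> I x) ->
    \prod_(x <- l) x = 0.

Definition semiprime : Prop :=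
  forall I : R -> Prop, two_sided_ideal I -> nilpotent_ideal I -> forall x, I x -> x = 0.

Definition lann (X : R -> Prop) : R -> Prop := fun r => forall x, X x -> r * x = 0.

Definition acc_left_annihilators : Prop :=
  forall X : nat -> (R -> Prop),
    (forall n r, lann (X n) r -> lann (X n.+1) r) ->
    exists N, forall n, (N <= n)%N -> forall r, lann (X n) r <-> lann (X N) r.

Definition finite_left_uniform_dim : Prop :=
  ~ exists I : nat -> (R -> Prop),
      (forall n, left_ideal (I n)) /\ (forall n, exists x, I n x /\ x != 0) /\
      (forall (k : nat) (x : nat -> R), (forall i, I i (x i)) ->
          \sum_(i < k) x i = 0 -> forall i, (i < k)%N -> x i = 0).

Definition left_Goldie : Prop := acc_left_annihilators /\ finite_left_uniform_dim.

Definition multiplicative_set (S : R -> Prop) : Prop :=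
  [/\ S 1, ~ S 0 & (forall s t, S s -> S t -> S (s * t))].

Definition ore_set (S : R -> Prop) : Prop :=
  [/\ multiplicative_set S,
      (forall r s, S s -> exists s' r', S s' /\ s' * r = r' * s)
    & (forall r s, S s -> exists s' r', S s' /\ r * s' = s * r')].

(* ass_R(S): kernel of the canonical map R -> R<S^{-1}>.  Since R -> R<S^{-1}>
   is the universal S-inverting ring homomorphism, its kernel is the set of r
   killed by every ring homomorphism f : R -> T that inverts every element
   of S. *)
Definition inverts (T : pzRingType) (f : {rmorphism R -> T}) (S : R -> Prop) : Prop :=
  forall s, S s -> exists u : T, f s * u = 1 /\ u * f s = 1.

Definition ass (S : R -> Prop) : R -> Prop :=
  fun r => forall (T : pzRingType) (f : {rmorphism R -> T}), inverts f S -> f r = 0.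

End RingDefs.

(* The S-torsion elements, those
   x with s * x * t = 0 for some s, t in S, form a two-sided ideal T, and S acts
   bijectively on the module of left fractions S^-1 (R / T).  Hence R acts on
   this module through a ring morphism into its additive endomorphisms which
   inverts S; it kills ass(S), and it kills x only if x is in T.
   A regular x cannot satisfy s * x * t = 0: for w = t * s, the ACC applied to
   the left annihilators of the powers of w gives v = w ^+ n in S with
   lann(v ^+ 2) = lann(v).  Then v * x * v = 0, and a left Ore relation
   s' * (v * x) = r' * v gives r' * v ^+ 2 = 0, so r' * v = 0, s' * v * x = 0,
   and s' * v = 0 by regularity, contradicting 0 \notin S. *)

From HB Require Import structures.
From mathcomp Require Import all_boot all_order all_algebra.
From mathcomp Require Import boolp.
Set Implicit Arguments. Unset Strict Implicit. Unset Printing Implicit Defensive.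
Import GRing.Theory.
Local Open Scope ring_scope.
Local Open Scope quotient_scope.

Section AdditiveEndomorphisms.
Variable V : zmodType.

Record addEnd := AddEnd { addEnd_fun :> V -> V; _ : {morph addEnd_fun : a b / a + b} }.

Lemma addEndD (f : addEnd) : {morph f : a b / a + b}.
Proof. by case: f. Qed.

Lemma addEnd_ext (f g : addEnd) : f =1 g -> f = g.
Proof.
case: f g => [f fD] [g gD] /= /funext fg; subst g.
by congr AddEnd; exact: Prop_irrelevance.
Qed.

Fact addEnd_zero_morph : {morph (fun _ : V => 0 : V) : a b / a + b}.
Proof. by move=> a b; rewrite addr0. Qed.

Fact addEnd_opp_morph (f : addEnd) : {morph (fun a => - f a) : a b / a + b}.
Proof. by move=> a b; rewrite addEndD opprD. Qed.

Fact addEnd_add_morph (f g : addEnd) : {morph (fun a => f a + g a) : a b / a + b}.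
Proof. by move=> a b; rewrite !addEndD addrACA. Qed.

Fact addEnd_comp_morph (f g : addEnd) : {morph f \o g : a b / a + b}.
Proof. by move=> a b /=; rewrite !addEndD. Qed.

Definition addEnd_zero := AddEnd addEnd_zero_morph.
Definition addEnd_opp f := AddEnd (addEnd_opp_morph f).
Definition addEnd_add f g := AddEnd (addEnd_add_morph f g).
Definition addEnd_one := @AddEnd id (fun _ _ => erefl).
Definition addEnd_comp f g := AddEnd (addEnd_comp_morph f g).

Fact addEnd_addA : associative addEnd_add.
Proof. by move=> f g h; apply: addEnd_ext => a /=; rewrite addrA. Qed.
Fact addEnd_addC : commutative addEnd_add.
Proof. by move=> f g; apply: addEnd_ext => a /=; rewrite addrC. Qed.
Fact addEnd_add0 : left_id addEnd_zero addEnd_add.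
Proof. by move=> f; apply: addEnd_ext => a /=; rewrite add0r. Qed.
Fact addEnd_addN : left_inverse addEnd_zero addEnd_opp addEnd_add.
Proof. by move=> f; apply: addEnd_ext => a /=; rewrite addNr. Qed.

HB.instance Definition _ := gen_eqMixin addEnd.
HB.instance Definition _ := gen_choiceMixin addEnd.
HB.instance Definition _ :=
  GRing.isZmodule.Build addEnd addEnd_addA addEnd_addC addEnd_add0 addEnd_addN.

Fact addEnd_compA : associative addEnd_comp.
Proof. by move=> f g h; apply: addEnd_ext. Qed.
Fact addEnd_comp1l : left_id addEnd_one addEnd_comp.
Proof. by move=> f; apply: addEnd_ext. Qed.
Fact addEnd_comp1r : right_id addEnd_one addEnd_comp.
Proof. by move=> f; apply: addEnd_ext. Qed.
Fact addEnd_compDl : left_distributive addEnd_comp +%R.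
Proof. by move=> f g h; apply: addEnd_ext. Qed.
Fact addEnd_compDr : right_distributive addEnd_comp +%R.
Proof. by move=> f g h; apply: addEnd_ext => a /=; rewrite addEndD. Qed.

HB.instance Definition _ := GRing.Zmodule_isPzRing.Build addEnd
  addEnd_compA addEnd_comp1l addEnd_comp1r addEnd_compDl addEnd_compDr.

End AdditiveEndomorphisms.

Section ScaleEndomorphism.
Variables (R : pzRingType) (V : lmodType R).

Definition scale_addEnd (r : R) : addEnd V := AddEnd (scalerDr r).

Fact scale_addEnd_zmod_morphism : zmod_morphism scale_addEnd.
Proof. by move=> r1 r2; apply: addEnd_ext => v /=; rewrite scalerBl. Qed.

Fact scale_addEnd_monoid_morphism : monoid_morphism scale_addEnd.
Proof.
by split=> [|r1 r2]; apply: addEnd_ext => v /=; rewrite ?scale1r ?scalerA.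
Qed.

HB.instance Definition _ :=
  GRing.isZmodMorphism.Build R (addEnd V) scale_addEnd scale_addEnd_zmod_morphism.
HB.instance Definition _ :=
  GRing.isMonoidMorphism.Build R (addEnd V) scale_addEnd scale_addEnd_monoid_morphism.

Variable S : R -> Prop.
Hypothesis S_bij : forall s, S s -> bijective ( *:%R s : V -> V).

Lemma scale_addEnd_inverts : inverts scale_addEnd S.
Proof.
move=> s /S_bij [g sK gK].
have gD : {morph g : a b / a + b}.
  by move=> a b; apply: (can_inj sK); rewrite /= scalerDr !gK.
by exists (AddEnd gD); split; apply: addEnd_ext => v /=; rewrite ?gK ?sK.
Qed.

Lemma ass_scale_eq0 r : ass S r -> forall v : V, r *: v = 0.
Proof.
move=> /(_ _ scale_addEnd scale_addEnd_inverts) r0 v.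
by rewrite -[LHS]/(scale_addEnd r v) r0.
Qed.

End ScaleEndomorphism.

Lemma lann_exp_stable (R : pzRingType) : acc_left_annihilators R ->
  forall w : R, exists2 n, (0 < n)%N &
    forall r, r * (w ^+ n * w ^+ n) = 0 -> r * w ^+ n = 0.
Proof.
move=> acc w; pose X k y := y = w ^+ k.
have X_mono k r : lann (X k) r -> lann (X k.+1) r.
  by move=> rX _ ->; rewrite exprSr mulrA (rX (w ^+ k)) ?mul0r.
have [N XN] := acc X X_mono.
exists N.+1 => // r r0.
have rXN : lann (X N) r.
  apply/(XN (N.+1 + N.+1)%N); first by rewrite addSn ltnW // ltnS leq_addr.
  by move=> _ ->; rewrite exprD.
by rewrite exprSr mulrA (rXN (w ^+ N)) ?mul0r.
Qed.

Section OreLocalization.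
Variables (R : pzRingType) (S : R -> Prop).
Hypothesis S_ore : ore_set S.

Let S1 : S 1. Proof. by case: S_ore => -[]. Qed.
Let S_neq0 : ~ S 0. Proof. by case: S_ore => -[]. Qed.
Let SM s t : S s -> S t -> S (s * t).
Proof. by case: S_ore => -[_ _ SM] _ _; apply: SM. Qed.
Let ore_l r s : S s -> exists s' r', S s' /\ s' * r = r' * s.
Proof. by case: S_ore => _ ore _; apply: ore. Qed.
Let ore_r r s : S s -> exists s' r', S s' /\ r * s' = s * r'.
Proof. by case: S_ore => _ _ ore; apply: ore. Qed.

Definition tors (r : R) : Prop := exists s t, [/\ S s, S t & s * r * t = 0].

Lemma tors0 : tors 0.
Proof. by exists 1, 1; rewrite mulr0 mul0r. Qed.

Lemma torsMl r z : tors z -> tors (r * z).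
Proof.
case=> s [t [Ss St szt]]; have [s' [r' [Ss' ore]]] := ore_l r Ss.
by exists s', t; split=> //; rewrite !mulrA ore -!mulrA (mulrA s) szt mulr0.
Qed.

Lemma torsMr r z : tors z -> tors (z * r).
Proof.
case=> s [t [Ss St szt]]; have [t' [r' [St' ore]]] := ore_r r St.
by exists s, t'; split=> //; rewrite -!mulrA ore !mulrA szt !mul0r.
Qed.

Lemma torsD a b : tors a -> tors b -> tors (a + b).
Proof.
case=> s1 [t1 [Ss1 St1 a0]] [s2 [t2 [Ss2 St2 b0]]].
have [s [u [Ss ore_s]]] := ore_l s1 Ss2.
have [t [v [St ore_t]]] := ore_r t1 St2.
exists (s * s1), (t1 * t); split; [exact: SM | exact: SM |].
rewrite mulrDr mulrDl.
have -> : s * s1 * a * (t1 * t) = s * (s1 * a * t1) * t by rewrite !mulrA.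
have -> : s * s1 * b * (t1 * t) = u * (s2 * b * t2) * v.
  by rewrite ore_s ore_t !mulrA.
by rewrite a0 b0 !(mulr0, mul0r) addr0.
Qed.

Lemma torsN a : tors a -> tors (- a).
Proof. by rewrite -mulN1r; exact: torsMl. Qed.

Lemma tors_cancell s z : S s -> tors (s * z) -> tors z.
Proof.
move=> Ss [u [t [Su St uszt]]].
by exists (u * s), t; split=> //; [exact: SM | rewrite -(mulrA u)].
Qed.

Lemma tors_cancelr s z : S s -> tors (z * s) -> tors z.
Proof.
move=> Ss [u [t [Su St uzst]]].
by exists u, (s * t); split=> //; [exact: SM | rewrite mulrA -(mulrA u)].
Qed.

Lemma regular_notin_tors : acc_left_annihilators R ->
  forall x, regular x -> ~ tors x.
Proof.
move=> acc x [_ x_reg] [s [t [Ss St sxt]]].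
have [[//|n] _ w_stable] := lann_exp_stable acc (t * s).
pose v := (t * s) ^+ n.+1.
have Sv : S v.
  rewrite /v; elim: n.+1 => [|k IHk]; first by rewrite expr0.
  by rewrite exprS; apply: SM => //; apply: SM.
have vxv : v * x * v = 0.
  have -> : v * x * v = (t * s) ^+ n * t * (s * x * t) * (s * (t * s) ^+ n).
    by rewrite /v {1}exprSr exprS !mulrA.
  by rewrite sxt mulr0 mul0r.
have [s' [r' [Ss' ore]]] := ore_l (v * x) Sv.
have r'v : r' * v = 0 by apply: w_stable; rewrite mulrA -ore -mulrA vxv mulr0.
have /x_reg s'v0 : s' * v * x = 0 by rewrite -mulrA ore r'v.
by apply: S_neq0; rewrite -s'v0; exact: SM.
Qed.

Lemma torsDB a1 a2 b1 b2 : tors (a1 - b1) -> tors (a2 - b2) -> tors (a1 + a2 - (b1 + b2)).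
Proof. by move=> t1 t2; rewrite opprD addrACA; exact: torsD. Qed.

Lemma tors_transfer {n} a b c d u z x y : S u ->
  c * u = x * a * z -> d * u = y * b * z -> tors (x * a - y * b) ->
  tors (c * n - d * n).
Proof.
move=> Su cu du tab; rewrite -mulrBl; apply: torsMr; apply: (tors_cancelr Su).
by rewrite mulrBl cu du -mulrBl; exact: torsMr.
Qed.

Lemma ore_pair r s : S s -> exists p : R * R, S p.1 /\ p.1 * r = p.2 * s.
Proof. by move=> /(ore_l r) [s' [r' e]]; exists (s', r'). Qed.

Definition ore_mult r s (Ss : S s) : R * R := sval (cid (ore_pair r Ss)).

Lemma ore_multP r s (Ss : S s) :
  S (ore_mult r Ss).1 /\ (ore_mult r Ss).1 * r = (ore_mult r Ss).2 * s.
Proof. exact: svalP (cid (ore_pair r Ss)). Qed.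

Record frac := Frac { den : R; num : R; denS : S den }.

HB.instance Definition _ := gen_eqMixin frac.
HB.instance Definition _ := gen_choiceMixin frac.

(* [p] stands for [den p ^-1 * num p] in [S^-1 (R / tors)]; two fractions are
   identified when they agree on every common left multiple of their
   denominators, which makes transitivity a single use of the Ore condition. *)
Definition frac_eq (p q : frac) : Prop :=
  forall x y, tors (x * den p - y * den q) -> tors (x * num p - y * num q).

Lemma frac_eq_refl p : frac_eq p p.
Proof.
by move=> x y; rewrite -!mulrBl => /(tors_cancelr (denS p)); exact: torsMr.
Qed.

Lemma frac_eq_sym p q : frac_eq p q -> frac_eq q p.
Proof. by move=> pq x y /torsN; rewrite opprB => /pq /torsN; rewrite opprB. Qed.

Lemma frac_eq_trans q p r : frac_eq p q -> frac_eq q r -> frac_eq p r.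
Proof.
move=> pq qr x z tpr; have [Sa ore] := ore_multP (x * den p) (denS q).
move: (ore_mult _ _) Sa ore => [a b] /= Sa ore.
have tpq : tors (a * x * num p - b * num q).
  by apply: pq; rewrite -mulrA ore subrr; exact: tors0.
have tqr : tors (b * num q - a * z * num r).
  by apply: qr; rewrite -ore -!mulrA -mulrBr; exact: torsMl.
apply: (tors_cancell Sa); rewrite mulrBr !mulrA.
by rewrite -[a * x * num p](subrK (b * num q)) -addrA; exact: torsD.
Qed.

Definition frac_eqb p q := `[< frac_eq p q >].

Fact frac_eqb_refl : reflexive frac_eqb.
Proof. by move=> p; apply/asboolP/frac_eq_refl. Qed.

Fact frac_eqb_sym : symmetric frac_eqb.
Proof. by move=> p q; apply/asboolP/asboolP; exact: frac_eq_sym. Qed.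

Fact frac_eqb_trans : transitive frac_eqb.
Proof. by move=> q p r /asboolP pq /asboolP qr; apply/asboolP/(frac_eq_trans pq). Qed.

Canonical frac_eqb_equiv := EquivRel frac_eqb frac_eqb_refl frac_eqb_sym frac_eqb_trans.

Definition fracmod := {eq_quot frac_eqb}.
HB.instance Definition _ : EqQuotient _ frac_eqb fracmod := EqQuotient.on fracmod.
HB.instance Definition _ := Choice.on fracmod.

Lemma pi_fracmod_eq p q : \pi_fracmod p = \pi q <-> frac_eq p q.
Proof. by split=> [/eqmodP/asboolP | pq]; last apply/eqmodP/asboolP. Qed.

Lemma frac_eq_repr p : frac_eq p (repr (\pi_fracmod p)).
Proof. by move: (esym (reprK (\pi_fracmod p))) => /eqmodP /asboolP. Qed.

Definition frac_zero := @Frac 1 0 S1.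
Definition frac_one := @Frac 1 1 S1.
Definition frac_opp p := @Frac (den p) (- num p) (denS p).

(* If [a * den p = b * den q], then
   [den p^-1 * num p + den q^-1 * num q = (a * den p)^-1 * (a * num p + b * num q)];
   if [a * r = b * den p], then [r * (den p^-1 * num p) = a^-1 * (b * num p)]. *)
Definition frac_add p q :=
  let c := ore_mult (den p) (denS q) in
  @Frac (c.1 * den p) (c.1 * num p + c.2 * num q) (SM (ore_multP _ _).1 (denS p)).

Definition frac_scale r p :=
  let c := ore_mult r (denS p) in @Frac c.1 (c.2 * num p) (ore_multP _ _).1.

Definition frac_divl s (Ss : S s) p := @Frac (den p * s) (num p) (SM (denS p) Ss).

Lemma frac_addP p q : exists a b, [/\ a * den p = b * den q,
  den (frac_add p q) = a * den p & num (frac_add p q) = a * num p + b * num q].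
Proof.
have [_ e] := ore_multP (den p) (denS q).
by exists (ore_mult (den p) (denS q)).1, (ore_mult (den p) (denS q)).2.
Qed.

Lemma frac_scaleP r p : exists a b, [/\ a * r = b * den p,
  den (frac_scale r p) = a & num (frac_scale r p) = b * num p].
Proof.
have [_ e] := ore_multP r (denS p).
by exists (ore_mult r (denS p)).1, (ore_mult r (denS p)).2.
Qed.

Lemma frac_eq_add p p' q q' :
  frac_eq p p' -> frac_eq q q' -> frac_eq (frac_add p q) (frac_add p' q').
Proof.
move=> pp' qq' x y.
have [a [b [e dE nE]]] := frac_addP p q; have [a' [b' [e' dE' nE']]] := frac_addP p' q'.
rewrite dE dE' nE nE' !mulrDr !mulrA => t; apply: torsDB; first exact: pp'.
by apply: qq'; rewrite -!mulrA -e -e' !mulrA.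
Qed.

Lemma frac_eq_opp p q : frac_eq p q -> frac_eq (frac_opp p) (frac_opp q).
Proof. by move=> pq x y /pq /torsN; rewrite opprB /= !mulrN opprK addrC. Qed.

Lemma frac_eq_scale r p q : frac_eq p q -> frac_eq (frac_scale r p) (frac_scale r q).
Proof.
move=> pq x y; have [a [b [e dE nE]]] := frac_scaleP r p.
have [a' [b' [e' dE' nE']]] := frac_scaleP r q.
rewrite dE dE' nE nE' !mulrA => t; apply: pq.
by rewrite -!mulrA -e -e' !mulrA -mulrBl; exact: torsMr.
Qed.

Lemma frac_eq_divl s (Ss : S s) p q :
  frac_eq p q -> frac_eq (frac_divl Ss p) (frac_divl Ss q).
Proof. by move=> pq x y t; apply: pq; apply: (tors_cancelr Ss); rewrite mulrBl -!mulrA. Qed.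

Lemma frac_addA p q r :
  frac_eq (frac_add p (frac_add q r)) (frac_add (frac_add p q) r).
Proof.
move=> x y; have [a [b [e1 dE1 nE1]]] := frac_addP q r.
have [c [d [e2 dE2 nE2]]] := frac_addP p (frac_add q r).
have [a' [b' [e3 dE3 nE3]]] := frac_addP p q.
have [c' [d' [e4 dE4 nE4]]] := frac_addP (frac_add p q) r.
rewrite dE2 dE4 nE2 nE4 dE1 dE3 nE1 nE3 in e2 e4 *.
rewrite !mulrDr !mulrA !addrA => t; apply: torsDB; first apply: torsDB.
- by apply: (tors_transfer (z := 1) (denS p) _ _ t); rewrite mulr1 -!mulrA.
- by apply: (tors_transfer (z := 1) (denS q) _ _ t); rewrite mulr1 -!mulrA ?e2 ?e3.
- by apply: (tors_transfer (z := 1) (denS r) _ _ t); rewrite mulr1 -!mulrA ?e2 ?e1 ?e4.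
Qed.

Lemma frac_addC p q : frac_eq (frac_add p q) (frac_add q p).
Proof.
move=> x y; have [a [b [e1 dE1 nE1]]] := frac_addP p q.
have [a' [b' [e2 dE2 nE2]]] := frac_addP q p.
rewrite dE1 dE2 nE1 nE2 !mulrDr !mulrA [y * a' * _ + _]addrC => t.
apply: torsDB.
- by apply: (tors_transfer (z := 1) (denS p) _ _ t); rewrite mulr1 -!mulrA ?e2.
- by apply: (tors_transfer (z := 1) (denS q) _ _ t); rewrite mulr1 -!mulrA ?e1.
Qed.

Lemma frac_add0 p : frac_eq (frac_add frac_zero p) p.
Proof.
move=> x y; have [a [b [e dE nE]]] := frac_addP frac_zero p.
rewrite dE nE mulr0 add0r !mulrA => t.
by apply: (tors_transfer (z := 1) (denS p) _ _ t); rewrite mulr1 -?mulrA -?e.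
Qed.

Lemma frac_addN p : frac_eq (frac_add (frac_opp p) p) frac_zero.
Proof.
move=> x y _; have [a [b [e _ nE]]] := frac_addP (frac_opp p) p.
rewrite /= in e; rewrite nE /= mulr0 subr0 mulrN -mulNr -mulrDl.
apply/torsMl/torsMr/(tors_cancelr (denS p)).
by rewrite mulrDl mulNr e addNr; exact: tors0.
Qed.

Lemma frac_scale1 p : frac_eq (frac_scale 1 p) p.
Proof.
move=> x y; have [a [b [e dE nE]]] := frac_scaleP 1 p.
rewrite dE nE mulrA => t.
by apply: (tors_transfer (z := 1) (denS p) _ _ t); rewrite -!mulrA ?mulr1 -?e ?mulr1.
Qed.

Lemma frac_scaleA r1 r2 p :
  frac_eq (frac_scale r1 (frac_scale r2 p)) (frac_scale (r1 * r2) p).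
Proof.
move=> x y; have [a [b [e1 dE1 nE1]]] := frac_scaleP r2 p.
have [c [d [e2 dE2 nE2]]] := frac_scaleP r1 (frac_scale r2 p).
have [a' [b' [e3 dE3 nE3]]] := frac_scaleP (r1 * r2) p.
rewrite dE1 in e2; rewrite dE2 dE3 nE2 nE3 nE1 !mulrA => t.
apply: (tors_transfer (z := r1 * r2) (denS p) _ _ t).
- by rewrite -!mulrA -e1 (mulrA d) -e2 -mulrA.
- by rewrite -!mulrA e3.
Qed.

Lemma frac_scaleDr r p q :
  frac_eq (frac_scale r (frac_add p q)) (frac_add (frac_scale r p) (frac_scale r q)).
Proof.
move=> x y; have [a [b [e1 dE1 nE1]]] := frac_addP p q.
have [c [d [e2 dE2 nE2]]] := frac_scaleP r (frac_add p q).
have [a' [b' [e3 dE3 nE3]]] := frac_scaleP r p.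
have [a'' [b'' [e4 dE4 nE4]]] := frac_scaleP r q.
have [c' [d' [e5 dE5 nE5]]] := frac_addP (frac_scale r p) (frac_scale r q).
rewrite dE1 dE3 dE4 in e2 e5; rewrite dE2 dE5 nE2 nE5 nE1 nE3 nE4 dE3.
rewrite !mulrDr !mulrA => t; apply: torsDB.
- by apply: (tors_transfer (z := r) (denS p) _ _ t); rewrite -!mulrA ?e2 ?e3.
- apply: (tors_transfer (z := r) (denS q) _ _ t).
  + by rewrite -!mulrA e2 e1.
  + by rewrite -!mulrA -e4 (mulrA d') -e5 -mulrA.
Qed.

Lemma frac_scaleDl r1 r2 p :
  frac_eq (frac_scale (r1 + r2) p) (frac_add (frac_scale r1 p) (frac_scale r2 p)).
Proof.
move=> x y; have [a [b [e1 dE1 nE1]]] := frac_scaleP (r1 + r2) p.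
have [c1 [d1 [e2 dE2 nE2]]] := frac_scaleP r1 p.
have [c2 [d2 [e3 dE3 nE3]]] := frac_scaleP r2 p.
have [c [d [e4 dE4 nE4]]] := frac_addP (frac_scale r1 p) (frac_scale r2 p).
rewrite dE2 dE3 in e4; rewrite dE1 dE4 nE1 nE4 nE2 nE3 dE2.
rewrite !mulrDr !mulrA -mulrDl => t.
apply: (tors_transfer (z := r1 + r2) (denS p) _ _ t).
- by rewrite -!mulrA e1.
- by rewrite mulrDl mulrDr -!mulrA -e2 -e3 (mulrA d) -e4 -mulrA.
Qed.

Lemma frac_scale_divl s (Ss : S s) p : frac_eq (frac_scale s (frac_divl Ss p)) p.
Proof.
move=> x y; have [a [b [e dE nE]]] := frac_scaleP s (frac_divl Ss p).
rewrite dE nE mulrA => t.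
by apply: (tors_transfer (z := s) (SM (denS p) Ss) _ _ t); rewrite -!mulrA -?e.
Qed.

Lemma frac_divl_scale s (Ss : S s) p : frac_eq (frac_divl Ss (frac_scale s p)) p.
Proof.
move=> x y; have [a [b [e dE nE]]] := frac_scaleP s p.
change (tors (x * (den (frac_scale s p) * s) - y * den p) ->
        tors (x * num (frac_scale s p) - y * num p)).
rewrite dE nE !mulrA => t.
apply: (tors_transfer (z := 1) (denS p) _ _ t); rewrite mulr1 //.
by rewrite -!mulrA e.
Qed.

Lemma frac_scale_one_eq0 x : frac_eq (frac_scale x frac_one) frac_zero -> tors x.
Proof.
have [a [b [e dE nE]]] := frac_scaleP x frac_one; rewrite /= mulr1 in e.
move=> /(_ 1 a); rewrite dE nE /= !mul1r !mulr1 mulr0 subrr subr0 -e => /(_ tors0).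
by apply: tors_cancell; rewrite -dE; exact: denS.
Qed.

Definition fracmod_add := lift_op2 fracmod frac_add.
Definition fracmod_opp := lift_op1 fracmod frac_opp.
Definition fracmod_scale r := lift_op1 fracmod (frac_scale r).
Definition fracmod_divl s (Ss : S s) := lift_op1 fracmod (frac_divl Ss).

Lemma pi_fracmod_add : {morph \pi : p q / frac_add p q >-> fracmod_add p q}.
Proof.
by move=> p q; unlock fracmod_add; apply/pi_fracmod_eq/frac_eq_add; exact: frac_eq_repr.
Qed.
Canonical pi_fracmod_add_morph := PiMorph2 pi_fracmod_add.

Lemma pi_fracmod_opp : {morph \pi : p / frac_opp p >-> fracmod_opp p}.
Proof.
by move=> p; unlock fracmod_opp; apply/pi_fracmod_eq/frac_eq_opp; exact: frac_eq_repr.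
Qed.
Canonical pi_fracmod_opp_morph := PiMorph1 pi_fracmod_opp.

Lemma pi_fracmod_scale r : {morph \pi : p / frac_scale r p >-> fracmod_scale r p}.
Proof.
by move=> p; unlock fracmod_scale; apply/pi_fracmod_eq/frac_eq_scale; exact: frac_eq_repr.
Qed.
Canonical pi_fracmod_scale_morph r := PiMorph1 (pi_fracmod_scale r).

Lemma pi_fracmod_divl s (Ss : S s) : {morph \pi : p / frac_divl Ss p >-> fracmod_divl Ss p}.
Proof.
by move=> p; unlock fracmod_divl; apply/pi_fracmod_eq/frac_eq_divl; exact: frac_eq_repr.
Qed.
Canonical pi_fracmod_divl_morph s Ss := PiMorph1 (@pi_fracmod_divl s Ss).

Fact fracmod_addA : associative fracmod_add.
Proof.
by elim/quotW=> p; elim/quotW=> q; elim/quotW=> r; rewrite !piE; apply/pi_fracmod_eq/frac_addA.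
Qed.

Fact fracmod_addC : commutative fracmod_add.
Proof. by elim/quotW=> p; elim/quotW=> q; rewrite !piE; apply/pi_fracmod_eq/frac_addC. Qed.

Fact fracmod_add0 : left_id (\pi frac_zero) fracmod_add.
Proof. by elim/quotW=> p; rewrite !piE; apply/pi_fracmod_eq/frac_add0. Qed.

Fact fracmod_addN : left_inverse (\pi frac_zero) fracmod_opp fracmod_add.
Proof. by elim/quotW=> p; rewrite !piE; apply/pi_fracmod_eq/frac_addN. Qed.

HB.instance Definition _ :=
  GRing.isZmodule.Build fracmod fracmod_addA fracmod_addC fracmod_add0 fracmod_addN.

Fact fracmod_scaleA a b v : fracmod_scale a (fracmod_scale b v) = fracmod_scale (a * b) v.
Proof. by elim/quotW: v => p; rewrite !piE; apply/pi_fracmod_eq/frac_scaleA. Qed.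

Fact fracmod_scale1 : left_id 1 fracmod_scale.
Proof. by elim/quotW=> p; rewrite !piE; apply/pi_fracmod_eq/frac_scale1. Qed.

Fact fracmod_scaleDr : right_distributive fracmod_scale fracmod_add.
Proof.
by move=> r; elim/quotW=> p; elim/quotW=> q; rewrite !piE; apply/pi_fracmod_eq/frac_scaleDr.
Qed.

Fact fracmod_scaleDl v : {morph fracmod_scale^~ v : a b / a + b >-> fracmod_add a b}.
Proof. by move=> a b; elim/quotW: v => p; rewrite !piE; apply/pi_fracmod_eq/frac_scaleDl. Qed.

HB.instance Definition _ := GRing.Zmodule_isLmodule.Build R fracmod
  fracmod_scaleA fracmod_scale1 fracmod_scaleDr fracmod_scaleDl.

Lemma fracmod_scale_bij s : S s -> bijective ( *:%R s : fracmod -> fracmod).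
Proof.
move=> Ss; exists (fracmod_divl Ss) => v; elim/quotW: v => p; rewrite /GRing.scale /= !piE.
  by apply/pi_fracmod_eq/frac_divl_scale.
by apply/pi_fracmod_eq/frac_scale_divl.
Qed.

Lemma regular_notin_ass : acc_left_annihilators R -> forall x, regular x -> ~ ass S x.
Proof.
move=> acc x x_reg /(ass_scale_eq0 fracmod_scale_bij)/(_ (\pi frac_one)) x1_eq0.
apply: (regular_notin_tors acc x_reg); apply/frac_scale_one_eq0/pi_fracmod_eq.
by move: x1_eq0; rewrite /GRing.scale /= piE.
Qed.

End OreLocalization.

Theorem theorem5p2 (R : pzRingType) :
  semiprime R -> left_Goldie R ->
  forall S : R -> Prop, ore_set S ->
  forall x : R, regular x -> ~ ass S x.
Proof. by move=> _ [acc _] S S_ore; exact: regular_notin_ass. Qed.
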